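(* There exists a one-sided non-adaptive tester for $k$-monotonicity of functions $f\colon[n]\to\{0,1\}$ with query complexity $q(n,\varepsilon,k)=O(k/\varepsilon)$.
   Context: $[n]=\{1,\dots,n\}$ with its usual order. A function $f\colon[n]\to\{0,1\}$ is $k$-monotone if there do not exist $x_1\leq\cdots\leq x_{k+1}$ with $f(x_1)=1$ and $f(x_i)\neq f(x_{i+1})$ for all $i\in[k]$. Distance is normalized Hamming distance. A tester, given $\varepsilon$ and query access to $f$, accepts $k$-monotone $f$ with probability at least $2/3$ and rejects $f$ that is $\varepsilon$-far (distance at least $\varepsilon$) from every $k$-monotone function with probability at least $2/3$; one-sided means $k$-monotone functions are accepted with probability $1$; non-adaptive means queries do not depend on previous answers. *)

From HB Require Import structures.
From mathcomp Require Import all_boot all_order all_algebra.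
Set Implicit Arguments. Unset Strict Implicit. Unset Printing Implicit Defensive.
Import Order.TTheory GRing.Theory Num.Theory.

(* The domain [n] = {1,...,n} is represented by 'I_n = {0,...,n-1}
   with its usual (order-isomorphic) order. *)

Definition kmonotone (n k : nat) (f : 'I_n -> bool) : Prop :=
  ~ (exists x : nat -> 'I_n,
        f (x 0%N) = true /\
        (forall i : nat, (i < k)%N -> (x i <= x i.+1)%N /\ f (x i) <> f (x i.+1))).

Local Open Scope ring_scope.

Definition hdist (R : realFieldType) (n : nat) (f g : 'I_n -> bool) : R :=
  (#|[pred x | f x != g x]|)%:R / n%:R.

Definition far_from_kmonotone (R : realFieldType) (n k : nat) (eps : R)
    (f : 'I_n -> bool) : Prop :=
  forall g : 'I_n -> bool, kmonotone k g -> eps <= hdist R f g.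

(* A randomized non-adaptive tester with query bound q: a finite sample space
   Omega with probability weights p; on random outcome w it queries the
   points of the list Q w (at most q of them, chosen independently of f),
   and outputs D w f (true = accept), which depends only on f restricted
   to Q w. *)
Definition accept_prob (R : realFieldType) (n : nat) (Omega : finType)
    (p : Omega -> R) (D : Omega -> ('I_n -> bool) -> bool) (f : 'I_n -> bool) : R :=
  \sum_(w : Omega) p w * (D w f)%:R.

Definition one_sided_nonadaptive_tester (R : realFieldType) (n k : nat) (eps : R)
    (q : nat) (Omega : finType) (p : Omega -> R) (Q : Omega -> seq 'I_n)
    (D : Omega -> ('I_n -> bool) -> bool) : Prop :=
  [/\ (forall w, 0 <= p w) /\ \sum_(w : Omega) p w = 1,
      (forall w, (size (Q w) <= q)%N),
      (forall w (f g : 'I_n -> bool),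
          (forall x, x \in Q w -> f x = g x) -> D w f = D w g),
      (forall f, kmonotone k f -> accept_prob p D f = 1) &
      (forall f, far_from_kmonotone k eps f -> accept_prob p D f <= 1 / 3)].

(* The tester samples every point independently with probability
   rho ~ 6 (k + 1) / (eps n), queries the sample when it has at most q = O(k / eps) points,
   and accepts iff a greedy left-to-right scan of the sample finds no alternating chain
   1, 0, 1, ... of length k + 1; such a chain is a witness against k-monotonicity, whence
   one-sidedness.  For soundness, the parity of the number of chain points found so far is
   a k-monotone function g whenever the scan accepts, and f differs from g only at unsampled
   points that the scan would have taken.  Flipping the sample at a single point shows that
   the expected number of such missed points is (1 - rho) / rho times the expected number of
   taken points, hence at most (1 - rho) (k + 1) / rho <= eps n / 6.  By Markov's inequality
   an eps-far f is accepted with probability at most 1/6, and the sample exceeds q points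
   with probability at most 1/6. *)

From HB Require Import structures.
From mathcomp Require Import all_boot all_order all_algebra.
From mathcomp Require Import zify ring lra.
Import Order.TTheory GRing.Theory Num.Theory.
Set Implicit Arguments. Unset Strict Implicit. Unset Printing Implicit Defensive.

Fixpoint alt_count (k : nat) (s F : nat -> bool) (m : nat) : nat :=
  if m is m'.+1 then
    let l := alt_count k s F m' in
    if [&& s m', F m' == ~~ odd l & l <= k] then l.+1 else l
  else 0.

Definition extends_chain (k : nat) (s F : nat -> bool) (m : nat) : bool :=
  (F m == ~~ odd (alt_count k s F m)) && (alt_count k s F m <= k).

Section AltCount.

Variable k : nat.
Implicit Types (s F : nat -> bool) (m : nat).

Lemma alt_countS s F m :
  alt_count k s F m.+1 = alt_count k s F m + (s m && extends_chain k s F m).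
Proof. by rewrite /= /extends_chain; case: ifP => _; lia. Qed.

Lemma alt_count_le s F m : alt_count k s F m <= k.+1.
Proof. by elim: m => //= m IH; case: ifP => // /and3P[_ _]; lia. Qed.

Lemma alt_count_mono s F : {homo alt_count k s F : m1 m2 / m1 <= m2}.
Proof.
move=> m1 m2 /subnKC <-; elim: (m2 - m1) => [|d IH]; first by rewrite addn0.
by rewrite addnS alt_countS; lia.
Qed.

Lemma eq_alt_count s1 s2 F1 F2 m :
  (forall y, y < m -> s1 y = s2 y /\ (s1 y -> F1 y = F2 y)) ->
  alt_count k s1 F1 m = alt_count k s2 F2 m.
Proof.
elim: m => //= m IH eq12; rewrite IH => [|y ltym]; last by apply: eq12; lia.
have [-> eqF] := eq12 m (ltnSn m).
by case: (s2 m) eqF => // /(_ isT) ->.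
Qed.

Lemma sum_extends_chain s F m :
  \sum_(y < m) (s y && extends_chain k s F y) = alt_count k s F m.
Proof.
elim: m => [|m IH]; first by rewrite big_ord0.
by rewrite big_ord_recr IH alt_countS.
Qed.

Lemma alt_count_chain s F m : exists c : nat -> nat,
  forall j, j < alt_count k s F m ->
    [/\ c j < m, F (c j) = ~~ odd j & j.+1 < alt_count k s F m -> c j < c j.+1].
Proof.
elim: m => [|m [c IH]]; first by exists (fun=> 0).
rewrite /=; case: ifP => [/and3P[_ /eqP Fm _]|_]; last first.
  by exists c => j /IH[? ? ?]; split => //; lia.
exists (fun j => if j == alt_count k s F m then m else c j) => j ltj.
case: eqP => [-> | /eqP nej]; first by split => //; lia.
have [ltcm Fc ltc] := IH j ltac:(lia).
split=> [|//|ltj1]; first lia.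
by case: eqP => [_|nej1]; [lia | apply: ltc; lia].
Qed.

End AltCount.

Definition nat_ext (n : nat) (h : 'I_n -> bool) (y : nat) : bool :=
  if insub y is Some i then h i else false.

Lemma nat_extE n (h : 'I_n -> bool) (i : 'I_n) : nat_ext h i = h i.
Proof. by rewrite /nat_ext valK. Qed.

Lemma nat_ext_insubd n (h : 'I_n -> bool) (x0 : 'I_n) y :
  y < n -> nat_ext h y = h (insubd x0 y).
Proof. by move=> ltyn; rewrite /nat_ext /insubd; case: insubP => //=; rewrite ltyn. Qed.

Section GreedyFit.

Variables (n k : nat) (S f : 'I_n -> bool).

Local Notation chain := (alt_count k (nat_ext S) (nat_ext f)).

Definition greedy_fit (x : 'I_n) : bool := odd (chain x.+1).

Lemma greedy_fit_kmonotone : chain n <= k -> kmonotone k greedy_fit.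
Proof.
move=> chain_le [x [fx0 xalt]].
pose l i := chain (x i).+1.
have l_gt i : i <= k -> i < l i.
  elim: i => [_|i IH lei]; first by move: fx0; rewrite /greedy_fit -/(l 0); case: (l 0).
  have [lex neq] := xalt i lei.
  have : l i <= l i.+1 by apply: alt_count_mono.
  have : l i != l i.+1 by apply: contra_not_neq neq => eql; rewrite /greedy_fit -/(l i) eql.
  have := IH (ltnW lei); lia.
have : l k <= chain n by apply: alt_count_mono.
have := l_gt k (leqnn k); lia.
Qed.

Lemma kmonotone_chain_le : kmonotone k f -> chain n <= k.
Proof.
move=> fmono; rewrite leqNgt; apply/negP => ltkc.
have [c hc] := alt_count_chain k (nat_ext S) (nat_ext f) n.
have {}hc j : j <= k -> [/\ c j < n, nat_ext f (c j) = ~~ odd j & j < k -> c j < c j.+1].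
  move=> lejk; have [? ? ltc] := hc j ltac:(lia); split => // ltjk.
  by apply: ltc; have := alt_count_le k (nat_ext S) (nat_ext f) n; lia.
have [ltc0 _ _] := hc 0 (leq0n k).
pose x0 : 'I_n := Ordinal ltc0.
apply: fmono; exists (fun i => insubd x0 (c i)); split.
  by have [ltc fc _] := hc 0 (leq0n k); rewrite -(nat_ext_insubd _ x0 ltc) fc.
move=> i ltik; have [ltci fci ltcc] := hc i (ltnW ltik).
have [ltci1 fci1 _] := hc i.+1 ltik.
rewrite !val_insubd ltci ltci1 -(nat_ext_insubd _ x0 ltci) -(nat_ext_insubd _ x0 ltci1).
by rewrite fci fci1 /=; split; [exact/ltnW/ltcc | case: (odd i)].
Qed.

Definition missed : nat :=
  \sum_(x : 'I_n) (~~ S x && extends_chain k (nat_ext S) (nat_ext f) x).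

Lemma card_greedy_fit_mismatch : chain n <= k -> #|[pred x | f x != greedy_fit x]| <= missed.
Proof.
move=> chain_le; rewrite -sum1_card big_mkcond /=; apply: leq_sum => x _.
case: ifP => // /[!inE]; rewrite /greedy_fit alt_countS oddD /extends_chain !nat_extE.
have -> : chain x <= k by apply: leq_trans chain_le; apply: alt_count_mono; apply: ltnW.
by case: (S x) (f x) (odd (chain x)) => [] [] [].
Qed.

Lemma sum_extends_chain_ord :
  \sum_(x : 'I_n) (S x && extends_chain k (nat_ext S) (nat_ext f) x) = chain n.
Proof. by rewrite -sum_extends_chain; apply: eq_bigr => x _; rewrite nat_extE. Qed.

End GreedyFit.

Local Open Scope ring_scope.

Definition toggle n (x : 'I_n) (S : {ffun 'I_n -> bool}) : {ffun 'I_n -> bool} :=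
  [ffun y => (y == x) (+) S y].

Lemma toggleK n (x : 'I_n) : involutive (toggle x).
Proof. by move=> S; apply/ffunP => y; rewrite !ffunE addbA addbb. Qed.

Lemma extends_chain_toggle n k (f : 'I_n -> bool) (x : 'I_n) (S : {ffun 'I_n -> bool}) :
  extends_chain k (nat_ext (toggle x S)) (nat_ext f) x
    = extends_chain k (nat_ext S) (nat_ext f) x.
Proof.
rewrite /extends_chain (@eq_alt_count k _ (nat_ext S) _ (nat_ext f)) // => y ltyx.
split=> //; rewrite /nat_ext; case: insubP => [i _ iy|] //.
by rewrite ffunE; case: eqP => // eqix; move: ltyx; rewrite -iy eqix ltnn.
Qed.

Section ProductBernoulli.

Variables (R : realFieldType) (n : nat) (rho : R).
Implicit Types (S : {ffun 'I_n -> bool}) (A : pred {ffun 'I_n -> bool}).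

Definition bern S : R := \prod_y (if S y then rho else 1 - rho).

Definition bern_mean (Y : {ffun 'I_n -> bool} -> R) : R := \sum_S bern S * Y S.

Definition bern_prob A : R := bern_mean (fun S => (A S)%:R).

Lemma bern_ge0 S : 0 <= rho <= 1 -> 0 <= bern S.
Proof. by case/andP=> ? ?; apply: prodr_ge0 => y _; case: (S y); lra. Qed.

Lemma bern_prob_ge0 A : 0 <= rho <= 1 -> 0 <= bern_prob A.
Proof. by move=> rho01; apply: sumr_ge0 => S _; rewrite mulr_ge0 ?bern_ge0. Qed.

Lemma sum_bern : \sum_S bern S = 1.
Proof.
rewrite /bern -(bigA_distr_bigA (fun _ (b : bool) => if b then rho else 1 - rho)) /=.
by apply: big1 => y _; rewrite big_bool /=; ring.
Qed.

Lemma bern_toggle x S : S x -> bern (toggle x S) * rho = (1 - rho) * bern S.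
Proof.
move=> Sx; rewrite /bern (bigD1 x) //= [in RHS](bigD1 x) //= ffunE eqxx Sx /=.
rewrite (eq_bigr (fun y => if S y then rho else 1 - rho)); first ring.
by move=> y /negbTE neyx; rewrite ffunE neyx.
Qed.

(* Flipping the coordinate x is a bijection of the sample space that scales the weight of
   every S with S x by (1 - rho) / rho. *)
Lemma bern_prob_toggle x A : (forall S, A (toggle x S) = A S) ->
  bern_prob (fun S => ~~ S x && A S) * rho = (1 - rho) * bern_prob (fun S => S x && A S).
Proof.
move=> Atog; rewrite /bern_prob /bern_mean.
rewrite (reindex_inj (can_inj (toggleK x))) mulr_suml mulr_sumr; apply: eq_bigr => S _.
rewrite /= Atog ffunE eqxx negbK; case: (S x) (@bern_toggle x S) => [tog|_] /=.
  by rewrite mulrAC tog; ring.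
by rewrite !mulr0 mul0r.
Qed.

Lemma bern_prob_mem x : bern_prob (fun S => S x) = rho.
Proof.
set P := bern_prob _; have := @bern_prob_toggle x predT (fun=> erefl).
have -> : bern_prob (fun S => S x && predT S) = P by apply: eq_bigr => S _; rewrite andbT.
have -> : bern_prob (fun S => ~~ S x && predT S) = 1 - P.
  rewrite /P /bern_prob /bern_mean -[X in _ = X - _]sum_bern -sumrB; apply: eq_bigr => S _ /=.
  by case: (S x); rewrite ?mulr0 ?mulr1 ?subr0 ?subrr.
lra.
Qed.

Lemma bern_mean_card : bern_mean (fun S => #|[pred x | S x]|%:R) = n%:R * rho.
Proof.
rewrite /bern_mean; under eq_bigr => S _.
  rewrite -sum1_card big_mkcond natr_sum mulr_sumr.
over.
rewrite exchange_big /= (eq_bigr (fun=> rho)) ?sumr_const ?card_ord ?mulr_natl // => x _.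
by rewrite -(bern_prob_mem x); apply: eq_bigr => S _; rewrite inE; case: (S x).
Qed.

Lemma bern_markov A (Y : {ffun 'I_n -> bool} -> R) t : 0 <= rho <= 1 ->
  (forall S, 0 <= Y S) -> (forall S, A S -> t <= Y S) -> bern_prob A * t <= bern_mean Y.
Proof.
move=> rho01 Yge0 AY; rewrite /bern_prob /bern_mean mulr_suml; apply: ler_sum => S _.
rewrite -mulrA; apply: ler_wpM2l; first exact: bern_ge0.
by case: (boolP (A S)) => [/AY|_]; rewrite ?mul1r ?mul0r.
Qed.

End ProductBernoulli.

Lemma bern_mean_missed_le (R : realFieldType) n k (rho : R) (f : 'I_n -> bool) :
  0 <= rho <= 1 -> bern_mean rho (fun S => (missed k S f)%:R) * rho <= (1 - rho) * k.+1%:R.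
Proof.
move=> rho01; rewrite /bern_mean; under eq_bigr do rewrite natr_sum mulr_sumr.
rewrite exchange_big mulr_suml /=.
rewrite (eq_bigr (fun x => (1 - rho) *
  bern_prob rho (fun S => S x && extends_chain k (nat_ext S) (nat_ext f) x))); last first.
  by move=> x _; exact: bern_prob_toggle (extends_chain_toggle k f x).
rewrite -mulr_sumr ler_wpM2l ?subr_ge0 ?(andP rho01).2 //.
rewrite /bern_prob /bern_mean exchange_big /=.
apply: le_trans (_ : \sum_S bern rho S * k.+1%:R <= _); last first.
  by rewrite -mulr_suml sum_bern mul1r.
apply: ler_sum => S _; rewrite -mulr_sumr -natr_sum sum_extends_chain_ord.
by rewrite ler_wpM2l ?bern_ge0 // ler_nat alt_count_le.
Qed.

Lemma kmonotone_false n k : kmonotone k (fun _ : 'I_n => false).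
Proof. by case=> x []. Qed.

Lemma far_from_kmonotone_dom_gt0 (R : realFieldType) n k (eps : R) (f : 'I_n -> bool) :
  0 < eps -> far_from_kmonotone k eps f -> (0 < n)%N.
Proof.
move=> eps_gt0 /(_ _ (@kmonotone_false n k)); rewrite /hdist.
by case: n f => // f; rewrite invr0 mulr0 leNgt eps_gt0.
Qed.

Section Tester.

Variables (R : realFieldType) (n k q : nat) (rho : R).
Hypothesis rho01 : 0 <= rho <= 1.
Implicit Types (S : {ffun 'I_n -> bool}) (f g : 'I_n -> bool).

Local Notation chain S f := (alt_count k (nat_ext S) (nat_ext f) n).

Definition sample_size S : nat := #|[pred x | S x]|.

Definition tester_queries S : seq 'I_n :=
  if (sample_size S <= q)%N then enum [pred x | S x] else [::].

Definition tester_accepts S g : bool := (sample_size S <= q)%N ==> (chain S g <= k)%N.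

Lemma size_tester_queries S : (size (tester_queries S) <= q)%N.
Proof. by rewrite /tester_queries; case: ifP; rewrite // -cardE. Qed.

Lemma tester_accepts_local S f g :
  (forall x, x \in tester_queries S -> f x = g x) -> tester_accepts S f = tester_accepts S g.
Proof.
rewrite /tester_accepts /tester_queries; case: ifP => //= small fg.
congr (_ <= k)%N; apply: eq_alt_count => y _; split=> //.
by rewrite /nat_ext; case: insubP => // x _ _ Sx; apply: fg; rewrite mem_enum.
Qed.

Lemma tester_complete f : kmonotone k f -> accept_prob (bern rho) tester_accepts f = 1.
Proof.
move=> fmono; rewrite -(sum_bern n rho); apply: eq_bigr => S _.
by rewrite /tester_accepts kmonotone_chain_le // implybT mulr1.
Qed.

Lemma tester_accept_prob_le f : accept_prob (bern rho) tester_accepts f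
  <= bern_prob rho (fun S => q < sample_size S)%N + bern_prob rho (fun S => chain S f <= k)%N.
Proof.
rewrite /accept_prob /bern_prob /bern_mean -big_split /=; apply: ler_sum => S _.
rewrite -mulrDr ler_wpM2l ?bern_ge0 // /tester_accepts ltnNge.
by case: (_ <= q)%N; case: (_ <= k)%N; rewrite /= ?(add0r, addr0, lerDr, ler0n, lexx).
Qed.

Lemma prob_oversized_le : bern_prob rho (fun S => q < sample_size S)%N * q.+1%:R <= n%:R * rho.
Proof.
by rewrite -bern_mean_card; apply: bern_markov => // S; rewrite ?ler0n // ler_nat.
Qed.

Lemma prob_oversized_eq0 : (n <= q)%N -> bern_prob rho (fun S => q < sample_size S)%N = 0.
Proof.
move=> le_nq; apply: big1 => S _; rewrite ltnNge (leq_trans _ le_nq) ?mulr0 //.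
by rewrite -[n in (_ <= n)%N]card_ord max_card.
Qed.
(* The greedy fit is k-monotone, so an eps-far f disagrees with it on at least eps n
   points, all of them missed by the scan. *)
Lemma prob_short_chain_le eps f : far_from_kmonotone k eps f ->
  bern_prob rho (fun S => chain S f <= k)%N * (eps * n%:R) * rho <= (1 - rho) * k.+1%:R.
Proof.
move=> far; apply: le_trans (bern_mean_missed_le k f rho01).
rewrite ler_wpM2r ?(andP rho01).1 //; apply: bern_markov => // S.
move=> /[dup] short /greedy_fit_kmonotone /far; rewrite /hdist => far_fit.
have [n0|n_gt0] := posnP n; first by rewrite (_ : n%:R = 0 :> R) ?n0 ?mulr0.
move: far_fit; rewrite ler_pdivlMr ?ltr0n // => /le_trans; apply.
by rewrite ler_nat card_greedy_fit_mismatch.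
Qed.


Lemma tester_sound eps f : 0 < eps -> 0 < rho ->
  rho * (eps * n%:R) <= 6 * k.+1%:R -> (1 - rho) * (6 * k.+1%:R) <= rho * (eps * n%:R) ->
  (n <= q)%N \/ 36 * k.+1%:R <= q.+1%:R * eps ->
  far_from_kmonotone k eps f -> accept_prob (bern rho) tester_accepts f <= 1 / 3.
Proof.
move=> eps_gt0 rho_gt0 rate_le tradeoff cover far.
have n_gt0 : 0 < n%:R :> R by rewrite ltr0n (far_from_kmonotone_dom_gt0 eps_gt0 far).
have k_gt0 : 0 < k.+1%:R :> R by rewrite ltr0n.
apply: le_trans (tester_accept_prob_le f) _.
set P1 := bern_prob _ _; set P2 := bern_prob _ _.
have P1_ge0 : 0 <= P1 by apply: bern_prob_ge0.
have P1_le : P1 <= 1 / 6.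
  case: cover => [le_nq | cover]; first by rewrite /P1 prob_oversized_eq0 //; lra.
  have := prob_oversized_le; rewrite -/P1 => P1_le.
  have : P1 * q.+1%:R * eps <= 6 * k.+1%:R by apply: le_trans rate_le; nra.
  nra.
have P2_le : P2 <= 1 / 6.
  have := prob_short_chain_le far; rewrite -/P2 => P2_le.
  have : 0 < rho * (eps * n%:R) by rewrite !mulr_gt0.
  nra.
lra.
Qed.

End Tester.

Lemma exists_truncated_ratio (R : realFieldType) (a b : R) : 0 < a -> 0 <= b ->
  exists rho : R, [/\ 0 < rho <= 1, rho * b <= a & (1 - rho) * a <= rho * b].
Proof.
move=> six_k1_gt0 eps_n_ge0; have [le_ab|lt_ba] := lerP a b; last by exists 1; split; lra.
have b_gt0 : 0 < b by apply: lt_le_trans le_ab.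
have ab_ge0 : 0 <= a / b by rewrite divr_ge0 // ltW.
exists (a / b); rewrite divfK ?gt_eqF // divr_gt0 // ler_pdivrMr // mul1r.
by split=> //; nra.
Qed.

(* The cap n makes the minimum exist without an archimedean hypothesis on R. *)
Lemma exists_truncated_ceil (R : realFieldType) (n : nat) (c e : R) : 0 <= c ->
  exists q : nat, q%:R * e <= c /\ ((n <= q)%N \/ c <= q.+1%:R * e).
Proof.
move=> c_ge0; have ex_cover : exists j, (n <= j)%N || (c <= j.+1%:R * e).
  by exists n; rewrite leqnn.
have [q /orP cover min_q] := ex_minnP ex_cover; exists q; split=> //.
case: q cover min_q => [|q] _ min_q; first by rewrite mul0r.
have : ~~ ((n <= q)%N || (c <= q.+1%:R * e)) by apply/negP => /min_q; rewrite ltnn.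
by rewrite negb_or -ltNge => /andP[_ /ltW].
Qed.

Unset Implicit Arguments.

Theorem theorem1p4 (R : realFieldType) :
  exists C : R, 0 < C /\
    forall (n k : nat) (eps : R), (1 <= k)%N -> 0 < eps -> eps <= 1 ->
      exists (q : nat) (Omega : finType) (p : Omega -> R)
             (Q : Omega -> seq 'I_n) (D : Omega -> ('I_n -> bool) -> bool),
        q%:R <= C * k%:R / eps /\
        one_sided_nonadaptive_tester k eps q p Q D.
Proof.
exists 72; split=> // n k eps k_ge1 eps_gt0 _.
have k_ge1R : 1 <= k%:R :> R by rewrite ler1n.
have six_k1_gt0 : 0 < 6 * k.+1%:R :> R by rewrite mulr_gt0 ?ltr0n.
have eps_n_ge0 : 0 <= eps * n%:R by rewrite mulr_ge0 // ltW.
have [rho [/andP[rho_gt0 rho_le1] rate_le tradeoff]] :=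
  exists_truncated_ratio six_k1_gt0 eps_n_ge0.
have rho01 : 0 <= rho <= 1 by rewrite ltW.
have k1_36_ge0 : 0 <= 36 * k.+1%:R :> R by rewrite mulr_ge0.
have [q [q_le cover]] := exists_truncated_ceil n eps k1_36_ge0.
exists q, _, (bern rho), (tester_queries q), (tester_accepts k q); split.
  rewrite ler_pdivlMr //; apply: le_trans q_le _; rewrite -natr1; lra.
split=> [|S|S f g|f|].
- by split=> [S|]; [exact: bern_ge0 | exact: sum_bern].
- exact: size_tester_queries.
- exact: tester_accepts_local.
- exact: tester_complete.
- by move=> f; apply: (tester_sound rho01 eps_gt0 rho_gt0 rate_le tradeoff cover).
Qed.
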